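(* Let $P>0$ be the least common multiple of the indices in $N$ of the sublattices generated by the vertex sets of all $(d-1)$-simplices with vertices in $\mathcal A$ (i.e. all linearly independent $d$-element subsets of $\mathcal A$). A lattice element $w\in N\cap K$ satisfies $x^w\in M(\beta)$ if and only if there exists an integer $k>0$ such that $(\beta-w)+kPw$ lies in the semigroup generated by the elements of $\mathcal A$.
   Context: $N\cong\mathbb Z^d$ lattice, $M=\mathrm{Hom}(N,\mathbb Z)$, $\mathcal A=\{v_1,\dots,v_n\}\subset N$ generating $N$ with a homomorphism $\mathrm h:N\to\mathbb Z$, $\mathrm h(v_j)=1$; $K=\mathbb R_{\ge0}\mathrm{Conv}(\mathcal A)$; $\Sigma$ the simplicial fan supported on $K$ from a regular triangulation of $\mathrm{Conv}(\mathcal A)$ with vertices in $\mathcal A$; fix $\beta\in N$. $\mathbb C[K,\Sigma]$: basis $x^w$ ($w\in K\cap N$), $x^{w_1}x^{w_2}=x^{w_1+w_2}$ if a cone of $\Sigma$ contains both, else $0$. $\mathrm{Box}(\Sigma)$: $v\in N$ with $v=\sum q_jv_j$, $0\le q_j<1$, $q_j=0$ unless $v_j$ spans a ray of one fixed maximal cone; $\sigma(v)$ the smallest cone containing $v$. $R$: subring generated by $x^{v_j}$ with $\mathbb R_{\ge0}v_j\in\Sigma$. $M(\beta)$: the $R$-submodule generated by $x^v\prod_{j:r_j<0,\ \mathbb R_{\ge0}v_j\in\Sigma,\ \mathbb R_{\ge0}v_j\not\prec\sigma(v)}x^{v_j}$ for all $v\in\mathrm{Box}(\Sigma)$, $r\in\mathbb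 Z^n$ with $v+\sum r_jv_j=\beta$ and $r_j\ge0$ whenever $\mathbb R_{\ge0}v_j\notin\Sigma$. *)

(* Lattice N = 'rV[int]_d, rational points 'rV[rat]_d,
   A = {v j | j < n}; C[K,Sigma] with coefficients in algC. *)
From HB Require Import structures.
From mathcomp Require Import all_boot all_order all_algebra algC.
From mathcomp Require Import boolp.
Set Implicit Arguments. Unset Strict Implicit. Unset Printing Implicit Defensive.
Import Order.TTheory GRing.Theory Num.Theory.
Local Open Scope ring_scope.

Definition toQ (d : nat) (w : 'rV[int]_d) : 'rV[rat]_d :=
  map_mx (fun z : int => z%:~R) w.

Definition inConeQ (d n : nat) (v : 'I_n -> 'rV[int]_d) (S : {set 'I_n})
  (x : 'rV[rat]_d) : Prop :=
  exists c : 'I_n -> rat, [/\ forall j, 0 <= c j,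
     forall j, j \notin S -> c j = 0 &
     x = \sum_(j < n) c j *: toQ (v j)].

Definition inK (d n : nat) (v : 'I_n -> 'rV[int]_d) (x : 'rV[rat]_d) : Prop :=
  inConeQ v setT x.

Definition lin_indep (d n : nat) (v : 'I_n -> 'rV[int]_d) (S : {set 'I_n}) : Prop :=
  forall c : 'I_n -> rat, \sum_(j in S) c j *: toQ (v j) = 0 ->
    forall j, j \in S -> c j = 0.

(* T = set of maximal simplices (as index sets) of a triangulation of Conv(A)
   with vertices in A; since h(v_j)=1 this is stated via the cones over them *)
Definition is_triangulation (d n : nat) (v : 'I_n -> 'rV[int]_d)
  (T : {set {set 'I_n}}) : Prop :=
  [/\ forall S, S \in T -> #|S| = d /\ lin_indep v S,
      forall x, inK v x -> exists2 S, S \in T & inConeQ v S x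
    & forall S S' x, S \in T -> S' \in T -> inConeQ v S x -> inConeQ v S' x ->
        inConeQ v (S :&: S') x].

(* regularity: a height function omega such that every maximal simplex is a
   lower facet of the lifted configuration (points off the simplex strictly above) *)
Definition is_regular (d n : nat) (v : 'I_n -> 'rV[int]_d)
  (T : {set {set 'I_n}}) : Prop :=
  exists omega : 'I_n -> rat, forall S, S \in T ->
    exists psi : 'cV[rat]_d, forall j,
      (j \in S -> (toQ (v j) *m psi) 0 0 = omega j) /\
      (j \notin S -> (toQ (v j) *m psi) 0 0 < omega j).

(* cones of the fan Sigma: cones over faces of maximal simplices *)
Definition fan_cone (n : nat) (T : {set {set 'I_n}}) (S : {set 'I_n}) : Prop :=
  exists2 S', S' \in T & S \subset S'.

Definition ray_in_fan (d n : nat) (v : 'I_n -> 'rV[int]_d) (T : {set {set 'I_n}})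
  (j : 'I_n) : Prop :=
  exists2 S, fan_cone T S &
    forall x, inConeQ v S x <-> exists2 t : rat, 0 <= t & x = t *: toQ (v j).

Definition in_min_cone (d n : nat) (v : 'I_n -> 'rV[int]_d) (T : {set {set 'I_n}})
  (y x : 'rV[rat]_d) : Prop :=
  forall S, fan_cone T S -> inConeQ v S y -> inConeQ v S x.

Definition ray_face_min (d n : nat) (v : 'I_n -> 'rV[int]_d) (T : {set {set 'I_n}})
  (y : 'rV[rat]_d) (j : 'I_n) : Prop :=
  in_min_cone v T y (toQ (v j)).

Definition in_box (d n : nat) (v : 'I_n -> 'rV[int]_d) (T : {set {set 'I_n}})
  (u : 'rV[int]_d) : Prop :=
  exists2 S, S \in T & exists q : 'I_n -> rat,
    [/\ forall j, 0 <= q j < 1, forall j, j \notin S -> q j = 0 &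
        toQ u = \sum_(j < n) q j *: toQ (v j)].

(* Elements of C[K,Sigma] represented by formal finite sums  sum a_i x^{w_i};
   two formal sums denote the same element iff their coefficient functions agree. *)
Definition fsum (d : nat) := seq (algC * 'rV[int]_d).

Definition coef (d : nat) (f : fsum d) (u : 'rV[int]_d) : algC :=
  \sum_(p <- f | p.2 == u) p.1.

Definition fmon (d : nat) (w : 'rV[int]_d) : fsum d := [:: (1, w)].

Definition common_cone (d n : nat) (v : 'I_n -> 'rV[int]_d) (T : {set {set 'I_n}})
  (w1 w2 : 'rV[int]_d) : bool :=
  `[< exists2 S, S \in T & inConeQ v S (toQ w1) /\ inConeQ v S (toQ w2) >].

Definition fmul (d n : nat) (v : 'I_n -> 'rV[int]_d) (T : {set {set 'I_n}})
  (f g : fsum d) : fsum d :=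
  flatten [seq [seq (p.1 * q.1, p.2 + q.2) | q <- g & common_cone v T p.2 q.2]
          | p <- f].

Definition fprod (d n : nat) (v : 'I_n -> 'rV[int]_d) (T : {set {set 'I_n}})
  (ws : seq 'rV[int]_d) : fsum d :=
  foldr (fun w acc => fmul v T (fmon w) acc) (fmon 0) ws.

Definition fscale (d : nat) (z : int) (f : fsum d) : fsum d :=
  [seq (z%:~R * p.1, p.2) | p <- f].

(* R = subring generated by the x^{v_j} with R_{>=0} v_j in Sigma:
   integer combinations of products of these generators *)
Inductive in_R (d n : nat) (v : 'I_n -> 'rV[int]_d) (T : {set {set 'I_n}}) :
  fsum d -> Prop :=
| inR_nil : in_R v T [::]
| inR_cons (z : int) (l : seq 'I_n) (f : fsum d) :
    (forall j, j \in l -> ray_in_fan v T j) -> in_R v T f ->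
    in_R v T (fscale z (fprod v T [seq v j | j <- l]) ++ f).

Definition gen_of (d n : nat) (v : 'I_n -> 'rV[int]_d) (T : {set {set 'I_n}})
  (u : 'rV[int]_d) (r : 'I_n -> int) : fsum d :=
  fprod v T (u :: [seq v j | j <- enum 'I_n &
      [&& r j < 0, `[< ray_in_fan v T j >] & ~~ `[< ray_face_min v T (toQ u) j >]]]).

Definition is_gen (d n : nat) (v : 'I_n -> 'rV[int]_d) (T : {set {set 'I_n}})
  (beta : 'rV[int]_d) (g : fsum d) : Prop :=
  exists u : 'rV[int]_d, exists r : 'I_n -> int,
    [/\ in_box v T u, u + \sum_(j < n) r j *: v j = beta,
        forall j, ~ ray_in_fan v T j -> 0 <= r j & g = gen_of v T u r].

Inductive in_M (d n : nat) (v : 'I_n -> 'rV[int]_d) (T : {set {set 'I_n}})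
  (beta : 'rV[int]_d) : fsum d -> Prop :=
| inM_nil : in_M v T beta [::]
| inM_cons (rr g f : fsum d) : in_R v T rr -> is_gen v T beta g ->
    in_M v T beta f -> in_M v T beta (fmul v T rr g ++ f).

Definition mono_in_M (d n : nat) (v : 'I_n -> 'rV[int]_d) (T : {set {set 'I_n}})
  (beta w : 'rV[int]_d) : Prop :=
  exists2 f, in_M v T beta f & forall u, coef f u = coef (fmon w) u.

(* P = lcm of |det| (= index in N of the generated sublattice) over all
   linearly independent d-element subsets of A *)
Definition Pidx (d n : nat) (v : 'I_n -> 'rV[int]_d) : nat :=
  \big[lcmn/1%N]_(f : {ffun 'I_d -> 'I_n} |
       \det ((\matrix_(i < d, k < d) v (f i) ord0 k : 'M[int]_d)) != 0)
    `|\det ((\matrix_(i < d, k < d) v (f i) ord0 k : 'M[int]_d))|%N.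

Definition in_semigroup (d n : nat) (v : 'I_n -> 'rV[int]_d) (x : 'rV[int]_d) : Prop :=
  exists c : 'I_n -> nat, x = \sum_(j < n) (c j)%:Z *: v j.

From Pilot Require Import Defs.
From HB Require Import structures.
From mathcomp Require Import all_boot all_order all_algebra algC.
From mathcomp Require Import boolp.
From mathcomp Require Import ring zify.
Import Order.TTheory GRing.Theory Num.Theory.
Local Open Scope ring_scope.
Set Implicit Arguments. Unset Strict Implicit. Unset Printing Implicit Defensive.

(* The exponent w of a term of an element of M(beta) is a sum of exponents
   lying in one maximal cone sigma of the fan: w = u + sum_{j in L} v_j, where
   beta = u + sum_j r_j v_j with u in Box and L contains the index set E of
   the generator.  P times each sigma-coordinate a_j of a lattice point is an
   integer (Cramer's rule: the determinant of sigma divides P), so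
   beta - w + kPw = sum_j (r_j - #L_j + kPa_j) v_j has nonnegative
   coefficients for k large, except possibly where a_j = 0; but there
   r_j >= 0, since a ray v_j with r_j < 0 outside the support of u lies in E.
   Conversely, if beta - w + kPw = sum_j c_j v_j, split the sigma-coordinates
   of w into integer and fractional parts: the fractional parts give the box
   element u, r_j = c_j + floor(a_j) - kPa_j, and the integer parts supply
   the rays of E together with a monomial x^(sum_{j in L} v_j) of R. *)

Lemma toQD d (x y : 'rV[int]_d) : toQ (x + y) = toQ x + toQ y.
Proof. exact: map_mxD. Qed.

Lemma toQB d (x y : 'rV[int]_d) : toQ (x - y) = toQ x - toQ y.
Proof. exact: map_mxB. Qed.

Lemma toQ_sum d (I : Type) (r : seq I) (F : I -> 'rV[int]_d) :
  toQ (\sum_(i <- r) F i) = \sum_(i <- r) toQ (F i).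
Proof. exact: raddf_sum. Qed.

Lemma toQZ d (z : int) (x : 'rV[int]_d) : toQ (z *: x) = z%:~R *: toQ x.
Proof. exact: map_mxZ. Qed.

Lemma toQ_inj d : injective (@toQ d).
Proof.
move=> x y /matrixP eq_xy; apply/matrixP=> i j.
by move: (eq_xy i j); rewrite !mxE => /intr_inj.
Qed.

Section Cones.

Variables (d n : nat) (v : 'I_n -> 'rV[int]_d).
Implicit Types (S : {set 'I_n}) (x y : 'rV[rat]_d).

Lemma toQ_comb (c : 'I_n -> int) :
  toQ (\sum_(j < n) c j *: v j) = \sum_(j < n) (c j)%:~R *: toQ (v j).
Proof. by rewrite toQ_sum; apply: eq_bigr => j _; exact: toQZ. Qed.

Lemma sum_count (l : seq 'I_n) :
  \sum_(x <- map v l) x = \sum_(j < n) (count_mem j l)%:Z *: v j.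
Proof.
elim: l => [|i l IHl]; first by rewrite big_nil big1 // => j _; rewrite scale0r.
rewrite big_cons IHl /=; under [RHS]eq_bigr do rewrite PoszD scalerDl.
rewrite big_split /=; congr (_ + _).
rewrite (bigD1 i) //= eqxx scale1r big1 ?addr0 // => j /negPf.
by rewrite eq_sym => ->; rewrite scale0r.
Qed.

Lemma inConeQ_sub (S S' : {set 'I_n}) x :
  S \subset S' -> inConeQ v S x -> inConeQ v S' x.
Proof.
move=> sSS' [c [c_ge0 c_out ->]]; exists c; split=> // j jS'.
by apply: c_out; apply: contra jS'; apply: (subsetP sSS').
Qed.

Lemma inConeQ0 S : inConeQ v S 0.
Proof. by exists (fun=> 0); split=> //; rewrite big1 // => j _; rewrite scale0r. Qed.

Lemma inConeQD S x y : inConeQ v S x -> inConeQ v S y -> inConeQ v S (x + y).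
Proof.
move=> [c [c_ge0 c_out ->]] [e [e_ge0 e_out ->]].
exists (fun j => c j + e j); split=> [j|j jS|]; first by rewrite addr_ge0.
  by rewrite c_out ?e_out ?addr0.
by rewrite -big_split; apply: eq_bigr => j _; rewrite scalerDl.
Qed.

Lemma inConeQ_sum S (I : eqType) (r : seq I) (F : I -> 'rV[rat]_d) :
  (forall i, i \in r -> inConeQ v S (F i)) -> inConeQ v S (\sum_(i <- r) F i).
Proof.
move=> coneF; rewrite big_seq.
by apply: big_ind => //; [exact: inConeQ0 | exact: inConeQD].
Qed.

Lemma sum_delta j : \sum_(i < n) (i == j)%:R *: toQ (v i) = toQ (v j).
Proof.
rewrite (bigD1 j) //= eqxx scale1r big1 ?addr0 // => i /negPf ->.
by rewrite scale0r.
Qed.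

Lemma inConeQ_gen S j : j \in S -> inConeQ v S (toQ (v j)).
Proof.
move=> jS; exists (fun i => (i == j)%:R); split=> [i|i|]; last by rewrite sum_delta.
  exact: ler0n.
by case: eqP => [->|]; rewrite ?jS.
Qed.

Lemma inConeQ_toQ_sum S (ws : seq 'rV[int]_d) :
  (forall w, w \in ws -> inConeQ v S (toQ w)) ->
  inConeQ v S (toQ (\sum_(w <- ws) w)).
Proof. by rewrite toQ_sum; apply: inConeQ_sum. Qed.

Lemma sum_support S (c : 'I_n -> rat) : (forall j, j \notin S -> c j = 0) ->
  \sum_(j < n) c j *: toQ (v j) = \sum_(j in S) c j *: toQ (v j).
Proof.
move=> c_out; rewrite [RHS]big_mkcond; apply: eq_bigr => j _.
by case: ifPn => // /c_out ->; rewrite scale0r.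
Qed.

Lemma coord_uniq S (c e : 'I_n -> rat) : lin_indep v S ->
  (forall j, j \notin S -> c j = 0) -> (forall j, j \notin S -> e j = 0) ->
  \sum_(j < n) c j *: toQ (v j) = \sum_(j < n) e j *: toQ (v j) -> c =1 e.
Proof.
move=> indepS c_out e_out eq_ce j.
have [jS|jNS] := boolP (j \in S); last by rewrite c_out ?e_out.
apply/eqP; rewrite -subr_eq0; apply/eqP; apply: (indepS (fun i => c i - e i)) jS.
under eq_bigr do rewrite scalerBl.
by rewrite sumrB -(sum_support c_out) -(sum_support e_out) eq_ce subrr.
Qed.

End Cones.

Section Triangulation.

Variables (d n : nat) (v : 'I_n -> 'rV[int]_d) (T : {set {set 'I_n}}).
Hypothesis tri : is_triangulation v T.
Implicit Types (S : {set 'I_n}) (x y : 'rV[rat]_d) (ws : seq 'rV[int]_d).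

Lemma triangulation_nonempty : exists S, S \in T.
Proof. by case: tri => _ /(_ 0 (inConeQ0 _ _)) [S ST _] _; exists S. Qed.

Lemma inConeQ_support S S' (c : 'I_n -> rat) : S \in T -> fan_cone T S' ->
  (forall j, 0 <= c j) -> (forall j, j \notin S -> c j = 0) ->
  inConeQ v S' (\sum_(j < n) c j *: toQ (v j)) -> forall j, c j != 0 -> j \in S'.
Proof.
case: tri => simplex _ meet ST [S'' S''T sS'S''] c_ge0 c_out coneS' j cj_neq0.
have coneS : inConeQ v S (\sum_(j < n) c j *: toQ (v j)) by exists c.
have [g [_ g_out eq_cg]] := meet _ _ _ ST S''T coneS (inConeQ_sub sS'S'' coneS').
have g_outS i : i \notin S -> g i = 0 by move=> iS; rewrite g_out // inE (negPf iS).
have g_outS'' i : i \notin S'' -> g i = 0.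
  by move=> iS; rewrite g_out // inE (negPf iS) andbF.
move: coneS' => [e [_ e_out eq_ce]].
have e_outS'' i : i \notin S'' -> e i = 0.
  by move=> iS; apply: e_out; apply: contra iS; apply: (subsetP sS'S'').
have c_g := coord_uniq (simplex _ ST).2 c_out g_outS eq_cg.
have g_e := coord_uniq (simplex _ S''T).2 g_outS'' e_outS'' (etrans (esym eq_cg) eq_ce).
by apply: contraR cj_neq0 => /e_out ej0; rewrite c_g g_e ej0.
Qed.

Lemma inConeQ_summand S S' x y : S \in T -> S' \in T ->
  inConeQ v S' x -> inConeQ v S' y -> inConeQ v S (x + y) -> inConeQ v S x.
Proof.
move=> ST S'T [c [c_ge0 c_out ->]] [e [e_ge0 e_out ->]] coneS.
exists c; split=> // j jS; apply/eqP; apply: contraNT jS => cj_neq0.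
have fanS : fan_cone T S by exists S.
apply: (inConeQ_support (c := fun i => c i + e i) S'T fanS) => [i|i iS'||].
- by rewrite addr_ge0.
- by rewrite c_out ?e_out ?addr0.
- by under eq_bigr do rewrite scalerDl; rewrite big_split.
- by rewrite paddr_eq0 // negb_and cj_neq0.
Qed.

Definition in_max_cone ws :=
  exists2 S, S \in T & forall w, w \in ws -> inConeQ v S (toQ w).

Lemma in_max_cone_sum ws S : in_max_cone ws -> S \in T ->
  inConeQ v S (toQ (\sum_(w <- ws) w)) -> forall w, w \in ws -> inConeQ v S (toQ w).
Proof.
move=> [S' S'T]; elim: ws => [//|a ws IHws] coneS' ST.
have coneS'_ws w : w \in ws -> inConeQ v S' (toQ w).
  by move=> w_ws; apply: coneS'; rewrite inE w_ws orbT.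
have coneS'_a : inConeQ v S' (toQ a) by apply: coneS'; rewrite mem_head.
have coneS'_sum := inConeQ_toQ_sum coneS'_ws.
rewrite big_cons toQD => coneS w /predU1P [->|w_ws].
  exact: inConeQ_summand ST S'T coneS'_a coneS'_sum coneS.
apply: (IHws coneS'_ws ST _ w w_ws).
by apply: inConeQ_summand ST S'T coneS'_sum coneS'_a _; rewrite addrC.
Qed.

End Triangulation.

Lemma ray_in_fan_of_simplex d n (v : 'I_n -> 'rV[int]_d) (T : {set {set 'I_n}}) S j :
  S \in T -> j \in S -> ray_in_fan v T j.
Proof.
move=> ST jS; exists [set j]; first by exists S; rewrite ?sub1set.
move=> x; split=> [[c [c_ge0 c_out ->]]|[t t_ge0 ->]].
  exists (c j) => //; rewrite (bigD1 j) //= big1 ?addr0 // => i ij.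
  by rewrite c_out ?scale0r // inE.
exists (fun i => (i == j)%:R * t); split=> [i|i|].
- by rewrite mulr_ge0 ?ler0n.
- by rewrite inE => /negPf ->; rewrite mul0r.
- by under eq_bigr do rewrite mulrC -scalerA; rewrite -scaler_sumr sum_delta.
Qed.

Section Rays.

Variables (d n : nat) (v : 'I_n -> 'rV[int]_d) (h : 'cV[int]_d).
Variable T : {set {set 'I_n}}.
Hypotheses (v_inj : injective v) (v_h : forall j, (v j *m h) 0 0 = 1).
Hypothesis tri : is_triangulation v T.
Implicit Types (S : {set 'I_n}) (x : 'rV[rat]_d).

Definition heightQ x : rat := (x *m map_mx intr h) 0 0.

Lemma heightQZ t x : heightQ (t *: x) = t * heightQ x.
Proof. by rewrite /heightQ -scalemxAl mxE. Qed.

Lemma heightQ_gen j : heightQ (toQ (v j)) = 1.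
Proof. by rewrite /heightQ -map_mxM mxE v_h. Qed.

(* A ray of the fan is a cone over a set of generators; since h = 1 on A and v
   is injective, that set can only be {j}. *)
Lemma ray_in_fan_simplex j : ray_in_fan v T j -> exists2 S, S \in T & j \in S.
Proof.
move=> [S0 [S ST sS0S] rayS0]; exists S => //; apply: (subsetP sS0S).
have S0_j i : i \in S0 -> i = j.
  move=> iS0; have [t _ vi] := (rayS0 _).1 (inConeQ_gen v iS0).
  have t1 : t = 1 by move: (congr1 heightQ vi); rewrite heightQZ !heightQ_gen mulr1.
  by apply: v_inj; apply: toQ_inj; rewrite vi t1 scale1r.
have [|c [_ c_out vj]] := (rayS0 (toQ (v j))).2; first by exists 1; rewrite ?scale1r.
apply/negPn/negP => jNS0.
have : toQ (v j) = 0.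
  rewrite vj big1 // => i _.
  have [iS0|/c_out ->] := boolP (i \in S0); last by rewrite scale0r.
  by move: jNS0; rewrite -(S0_j i iS0) iS0.
move/(congr1 heightQ); rewrite heightQ_gen /heightQ mul0mx mxE => /eqP.
by rewrite oner_eq0.
Qed.

Lemma ray_in_fan_mem S' j : ray_in_fan v T j -> fan_cone T S' ->
  inConeQ v S' (toQ (v j)) -> j \in S'.
Proof.
move=> /ray_in_fan_simplex [S ST jS] fanS' coneS'.
apply: (inConeQ_support tri (c := fun i => (i == j)%:R) ST fanS') => [i|i||].
- exact: ler0n.
- by case: eqP => [->|]; rewrite ?jS.
- by rewrite sum_delta.
- by rewrite eqxx oner_neq0.
Qed.

Lemma ray_face_minP S (e : 'I_n -> rat) j : S \in T ->
  (forall i, 0 <= e i) -> (forall i, i \notin S -> e i = 0) -> ray_in_fan v T j ->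
  ray_face_min v T (\sum_(i < n) e i *: toQ (v i)) j <-> e j != 0.
Proof.
move=> ST e_ge0 e_out rayj; split=> [face|ej_neq0 S' fanS' coneS'].
  pose S' := [set i in S | e i != 0].
  have fanS' : fan_cone T S'.
    by exists S => //; apply/subsetP => i; rewrite inE => /andP[].
  have coneS' : inConeQ v S' (\sum_(i < n) e i *: toQ (v i)).
    by exists e; split=> // i; rewrite inE negb_and negbK => /orP[/e_out|/eqP].
  by have := ray_in_fan_mem rayj fanS' (face S' fanS' coneS'); rewrite inE => /andP[].
exact/inConeQ_gen/(inConeQ_support tri ST fanS' e_ge0 e_out coneS').
Qed.

End Rays.

Lemma Pidx_gt0 d n (v : 'I_n -> 'rV[int]_d) : (0 < Pidx v)%N.
Proof.
apply: (big_ind (fun m => 0 < m)%N) => // [m1 m2 m1_gt0 m2_gt0|f detf_neq0].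
  by rewrite lcmn_gt0 m1_gt0.
by rewrite absz_gt0.
Qed.

Lemma set_enum_ffun n d (S : {set 'I_n}) : #|S| = d ->
  exists2 f : {ffun 'I_d -> 'I_n}, injective f & f @: setT = S.
Proof.
move=> cardS; pose f := [ffun i => enum_val (cast_ord (esym cardS) i)].
have f_inj : injective f.
  move=> i i'; rewrite !ffunE => /enum_val_inj/(congr1 (cast_ord cardS)).
  by rewrite !cast_ordKV.
exists f => //; apply/eqP.
rewrite eqEcard card_imset // cardsT card_ord cardS leqnn andbT.
by apply/subsetP => _ /imsetP [i _ ->]; rewrite ffunE enum_valP.
Qed.

Lemma det_scale_coord d (M : 'M[int]_d) (a : 'rV[rat]_d) (x : 'rV[int]_d) :
  a *m map_mx intr M = toQ x -> (\det M)%:~R *: a = toQ (x *m \adj M).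
Proof.
move=> a_M; rewrite [toQ _]map_mxM map_mx_adj -[map_mx _ x]/(toQ x) -a_M.
by rewrite -mulmxA mul_mx_adj mul_mx_scalar det_map_mx.
Qed.

Lemma Pidx_coord_int d n (v : 'I_n -> 'rV[int]_d) (S : {set 'I_n}) (x : 'rV[int]_d)
    (a : 'I_n -> rat) :
  #|S| = d -> lin_indep v S -> (forall j, j \notin S -> a j = 0) ->
  toQ x = \sum_(j < n) a j *: toQ (v j) -> forall j, (Pidx v)%:R * a j \is a Num.int.
Proof.
move=> cardS indepS a_out x_a j.
have [f f_inj imf] := set_enum_ffun cardS.
have sumS (F : 'I_n -> 'rV[rat]_d) : \sum_(j in S) F j = \sum_(i < d) F (f i).
  rewrite -imf big_imset /=; last by move=> ? ? _ _ /f_inj.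
  by apply: eq_bigl => i; rewrite inE.
pose M : 'M[int]_d := \matrix_(i, k) v (f i) 0 k.
have comb_M (y : 'rV[rat]_d) : y *m map_mx intr M = \sum_(i < d) y 0 i *: toQ (v (f i)).
  apply/matrixP => i k; rewrite !mxE summxE.
  by apply: eq_bigr => l _; rewrite !mxE (ord1 i).
have detM_neq0 : \det M != 0.
  apply/eqP => detM0.
  have /det0P [y /negP y_neq0 yM0] : \det (map_mx intr M) == 0 :> rat.
    by rewrite det_map_mx detM0.
  pose c j := \sum_(i < d | f i == j) y 0 i.
  have c_f i : c (f i) = y 0 i by rewrite /c (big_pred1 i) // => i'; rewrite inj_eq.
  have c_S0 : \sum_(j in S) c j *: toQ (v j) = 0.
    by rewrite sumS -[RHS]yM0 comb_M; apply: eq_bigr => i _; rewrite c_f.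
  apply: y_neq0; apply/eqP/matrixP => i k; rewrite (ord1 i) mxE -c_f.
  by apply: indepS c_S0 _ _; rewrite -imf imset_f.
have /dvdzP [q P_q] : (\det M %| (Pidx v)%:Z)%Z.
  by rewrite dvdzE; apply: (biglcmn_sup f).
have a_M : (\row_i a (f i)) *m map_mx intr M = toQ x.
  by rewrite comb_M x_a (sum_support _ a_out) sumS; apply: eq_bigr => i _; rewrite mxE.
have [jS|/a_out->] := boolP (j \in S); last by rewrite mulr0 rpred0.
have /imsetP [i _ ->] : j \in f @: setT by rewrite imf.
have /matrixP/(_ 0 i) := det_scale_coord a_M; rewrite !mxE => det_a.
by rewrite -[(Pidx v)%:R]/(((Pidx v)%:Z)%:~R) P_q intrM -mulrA det_a rpredM ?intr_int.
Qed.

Section FormalSums.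

Variables (d n : nat) (v : 'I_n -> 'rV[int]_d) (T : {set {set 'I_n}}).
Hypothesis tri : is_triangulation v T.
Implicit Types (ws : seq 'rV[int]_d) (f g : fsum d).

Lemma mem_fmul f g p : p \in fmul v T f g -> exists p1 q,
  [/\ p1 \in f, q \in g, common_cone v T p1.2 q.2 & p = (p1.1 * q.1, p1.2 + q.2)].
Proof.
move=> /flattenP [_ /mapP [p1 p1f ->] /mapP [q]].
by rewrite mem_filter => /andP [cc qg] ->; exists p1, q.
Qed.

Lemma mem_fprod ws p : p \in Defs.fprod v T ws ->
  p.2 = \sum_(w <- ws) w /\ in_max_cone v T ws.
Proof.
elim: ws p => [|a ws IHws] p.
  rewrite inE => /eqP ->; split; first by rewrite big_nil.
  by have [S ST] := triangulation_nonempty tri; exists S.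
move=> /mem_fmul [_ [q [/[1!inE] /eqP -> q_ws /asboolP [S ST [coneS_a coneS_q]] ->]]].
have [q_sum cone_ws] := IHws q q_ws; rewrite q_sum in coneS_q.
split; first by rewrite /= q_sum big_cons.
exists S => // w; rewrite inE => /predU1P [->|w_ws] //.
exact: (in_max_cone_sum tri cone_ws ST coneS_q w_ws).
Qed.

Lemma fprod_max_cone ws S : S \in T -> (forall w, w \in ws -> inConeQ v S (toQ w)) ->
  Defs.fprod v T ws = [:: (1, \sum_(w <- ws) w)].
Proof.
move=> ST; elim: ws => [|a ws IHws] coneS; first by rewrite big_nil.
have coneS_ws w : w \in ws -> inConeQ v S (toQ w).
  by move=> w_ws; apply: coneS; rewrite inE w_ws orbT.
have cc : common_cone v T a (\sum_(w <- ws) w).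
  apply/asboolP; exists S => //; split; last exact: inConeQ_toQ_sum.
  by apply: coneS; rewrite mem_head.
by rewrite /= IHws // /fmul /= cc /= mulr1 big_cons.
Qed.

Lemma mem_in_R rr p : in_R v T rr -> p \in rr -> exists l : seq 'I_n,
  [/\ forall j, j \in l -> ray_in_fan v T j, p.2 = \sum_(w <- map v l) w &
      in_max_cone v T (map v l)].
Proof.
elim=> [//|z l f rays_l _ IHf]; rewrite mem_cat => /orP [/mapP [q q_l ->]|/IHf //].
by have [? ?] := mem_fprod q_l; exists l.
Qed.

Definition gen_rays (u : 'rV[int]_d) (r : 'I_n -> int) : seq 'I_n :=
  [seq j <- enum 'I_n | [&& r j < 0, `[< ray_in_fan v T j >] &
                            ~~ `[< ray_face_min v T (toQ u) j >]]].

Lemma gen_ofE u r : gen_of v T u r = Defs.fprod v T (u :: map v (gen_rays u r)).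
Proof. by []. Qed.

Lemma mem_in_M beta f p : in_M v T beta f -> p \in f -> exists u r,
  [/\ u + \sum_(j < n) r j *: v j = beta, forall j, ~ ray_in_fan v T j -> 0 <= r j &
    exists L, [/\ {subset gen_rays u r <= L}, forall j, j \in L -> ray_in_fan v T j,
      p.2 = u + \sum_(w <- map v L) w & in_max_cone v T (u :: map v L)]].
Proof.
elim=> [//|rr g f0 rrR [u [r [_ u_beta r_ge0 ->]]] _ IHf0].
rewrite mem_cat => /orP [|/IHf0 //].
move=> /mem_fmul [p1 [q [p1_rr q_g /asboolP [S ST [coneS_p1 coneS_q]] ->]]] /=.
have [l [rays_l p1_l cone_l]] := mem_in_R rrR p1_rr.
rewrite gen_ofE in q_g; have [q_E cone_E] := mem_fprod q_g.
rewrite p1_l in coneS_p1; rewrite q_E in coneS_q.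
exists u, r; split=> //; exists (l ++ gen_rays u r); split.
- by move=> j jE; rewrite mem_cat jE orbT.
- move=> j; rewrite mem_cat => /orP [/rays_l //|].
  by rewrite mem_filter => /andP [/and3P [_ /asboolP]].
- by rewrite p1_l q_E big_cons map_cat big_cat /= addrCA.
exists S => // w; rewrite map_cat inE mem_cat => /or3P [/eqP->|w_l|w_E].
- by apply: (in_max_cone_sum tri cone_E ST coneS_q); rewrite mem_head.
- exact: (in_max_cone_sum tri cone_l ST coneS_p1).
- by apply: (in_max_cone_sum tri cone_E ST coneS_q); rewrite inE w_E orbT.
Qed.

End FormalSums.

Lemma exists_seq_counts n (E : seq 'I_n) (m : 'I_n -> int) : uniq E ->
  (forall j, 0 <= m j) -> (forall j, j \in E -> 0 < m j) ->
  exists L : seq 'I_n, forall j, (count_mem j (L ++ E))%:Z = m j.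
Proof.
move=> uniqE m_ge0 E_m.
exists (flatten [seq nseq (absz (m i) - (i \in E)) i | i <- enum 'I_n]) => j.
rewrite count_cat (count_uniq_mem _ uniqE) count_flatten sumnE !big_map -enumT.
rewrite (bigD1_seq j) ?mem_enum ?enum_uniq //= count_nseq /= eqxx mul1n.
rewrite big1 ?addn0 => [|i /negPf ij]; last by rewrite count_nseq /= ij.
by have := m_ge0 j; case: (boolP (j \in E)) => [/E_m|_] /=; lia.
Qed.

Lemma in_semigroup_shift d n (v : 'I_n -> 'rV[int]_d) (m : nat) (x w : 'rV[int]_d)
    (s : 'I_n -> int) (a : 'I_n -> rat) :
  (0 < m)%N -> x = \sum_(j < n) s j *: v j -> toQ w = \sum_(j < n) a j *: toQ (v j) ->
  (forall j, 0 <= a j) -> (forall j, m%:R * a j \is a Num.int) ->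
  (forall j, a j = 0 -> 0 <= s j) ->
  exists2 k : nat, (0 < k)%N & in_semigroup v (x + (k * m)%:Z *: w).
Proof.
move=> m_gt0 -> w_a a_ge0 ma_int s_ge0.
pose z j := Num.floor (m%:R * a j).
have ma_z j : m%:R * a j = (z j)%:~R by rewrite floorK.
(* Where a_j > 0, the integer m a_j is at least 1, so k m a_j >= k > |s_j|. *)
pose k := (\sum_(j < n) `|s j|)%N.+1.
have coef_ge0 j : 0 <= s j + k%:Z * z j.
  have [a0|a_neq0] := eqVneq (a j) 0.
    by rewrite /z a0 mulr0 floor0 mulr0 addr0 s_ge0.
  have z_gt0 : 0 < z j.
    by rewrite -(ltr0z rat) -ma_z mulr_gt0 ?ltr0n // lt_def a_neq0 a_ge0.
  have s_le_k : (`|s j| <= k)%N by rewrite ltnW // ltnS (bigD1 j) //= leq_addr.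
  nia.
exists k => //; exists (fun j => absz (s j + k%:Z * z j)); apply: toQ_inj.
rewrite toQD toQZ w_a !toQ_comb scaler_sumr -big_split; apply: eq_bigr => j _ /=.
rewrite gez0_abs // scalerA -scalerDl; congr (_ *: _).
rewrite -[((k * m)%N%:Z)%:~R]/((k * m)%:R) natrM -mulrA ma_z intrD intrM.
by rewrite -[(k%:Z)%:~R]/(k%:R).
Qed.

Lemma semigroup_shift_split d n (v : 'I_n -> 'rV[int]_d) (m k : nat)
    (beta w : 'rV[int]_d) (a : 'I_n -> rat) (c : 'I_n -> nat) (b : 'I_n -> int) :
  toQ w = \sum_(j < n) a j *: toQ (v j) -> (forall j, m%:R * a j \is a Num.int) ->
  beta - w + (k * m)%:Z *: w = \sum_(j < n) (c j)%:Z *: v j ->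
  (w - \sum_(j < n) b j *: v j) +
    \sum_(j < n) ((c j)%:Z + b j - k%:Z * Num.floor (m%:R * a j)) *: v j = beta.
Proof.
move=> w_a ma_int beta_c.
have -> : beta = \sum_(j < n) (c j)%:Z *: v j - (k * m)%:Z *: w + w.
  by rewrite -beta_c addrK subrK.
apply: toQ_inj; rewrite toQD [toQ (_ + w)]toQD !toQB toQZ !toQ_comb w_a scaler_sumr.
rewrite -!sumrB -!big_split; apply: eq_bigr => j _ /=.
rewrite scalerA -!scaleNr -!scalerDl; congr (_ *: _).
have := floorK (ma_int j); set z := Num.floor _ => ma_z.
rewrite -[((k * m)%N%:Z)%:~R]/((k * m)%:R) natrM -mulrA -ma_z.
by rewrite !intrD intrN intrM -[(k%:Z)%:~R]/(k%:R); ring.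
Qed.

Section Generators.

Variables (d n : nat) (v : 'I_n -> 'rV[int]_d) (h : 'cV[int]_d).
Variable T : {set {set 'I_n}}.
Hypotheses (v_inj : injective v) (v_h : forall j, (v j *m h) 0 0 = 1).
Hypothesis tri : is_triangulation v T.

Lemma mem_gen_rays S (e : 'I_n -> rat) u r j : S \in T ->
  (forall i, 0 <= e i) -> (forall i, i \notin S -> e i = 0) ->
  toQ u = \sum_(i < n) e i *: toQ (v i) ->
  (j \in gen_rays v T u r) = [&& r j < 0, `[< ray_in_fan v T j >] & e j == 0].
Proof.
move=> ST e_ge0 e_out u_e; rewrite mem_filter mem_enum andbT u_e.
case: (boolP `[< _ >]) => [/asboolP rayj|_]; last by rewrite !andbF.
have face_e := ray_face_minP v_inj v_h tri ST e_ge0 e_out rayj.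
by rewrite (asbool_equiv_eq face_e) asboolb negbK.
Qed.

Lemma mono_in_M_semigroup beta w : mono_in_M v T beta w ->
  exists2 k : nat, (0 < k)%N & in_semigroup v (beta - w + (k * Pidx v)%:Z *: w).
Proof.
move=> [f fM coef_f].
have /hasP [p pf /eqP p_w] : has (fun p => p.2 == w) f.
  apply: contraT => no_w; have := coef_f w.
  rewrite /coef big_hasC // big_cons eqxx big_nil addr0 => /eqP.
  by rewrite eq_sym oner_eq0.
have [u [r [u_beta r_ge0 [L [E_L rays_L p_L [S ST coneS]]]]]] := mem_in_M tri fM pf.
have [e [e_ge0 e_out u_e]] : inConeQ v S (toQ u) by apply: coneS; rewrite mem_head.
have L_S j : j \in L -> j \in S.
  move=> jL; apply: (ray_in_fan_mem v_inj v_h tri (rays_L j jL)); first by exists S.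
  by apply: coneS; rewrite inE map_f ?orbT.
pose a j := e j + (count_mem j L)%:R.
have a_out j : j \notin S -> a j = 0.
  by move=> jS; rewrite /a e_out // (count_memPn (contra (L_S j) jS)) addr0.
have w_a : toQ w = \sum_(j < n) a j *: toQ (v j).
  rewrite -p_w p_L toQD u_e sum_count toQ_comb -big_split; apply: eq_bigr => j _.
  by rewrite scalerDl.
apply: (in_semigroup_shift (s := fun j => r j - (count_mem j L)%:Z) (Pidx_gt0 v) _ w_a).
- rewrite -p_w p_L -u_beta sum_count opprD addrACA subrr add0r -sumrB.
  by apply: eq_bigr => j _; rewrite scalerBl.
- by move=> j; rewrite addr_ge0 ?ler0n.
- case: tri => /(_ S ST) [cardS indepS] _ _.
  exact: Pidx_coord_int cardS indepS a_out w_a.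
move=> j /eqP; rewrite paddr_eq0 ?ler0n // pnatr_eq0 => /andP [/eqP ej0 /eqP cnt0].
rewrite cnt0 subr0 leNgt; apply/negP => rj_neg.
case: (pselect (ray_in_fan v T j)) => [rayj|/r_ge0]; last by rewrite leNgt rj_neg.
have : j \in L.
  apply: E_L; rewrite (mem_gen_rays r j ST e_ge0 e_out u_e) rj_neg ej0 eqxx andbT.
  exact/asboolP.
by move/count_memPn: cnt0 => /negP.
Qed.

Lemma mono_in_M_of_gen beta u r (L : seq 'I_n) S : in_box v T u ->
  u + \sum_(j < n) r j *: v j = beta -> (forall j, ~ ray_in_fan v T j -> 0 <= r j) ->
  S \in T -> inConeQ v S (toQ u) ->
  (forall j, j \in L ++ gen_rays v T u r -> j \in S) ->
  mono_in_M v T beta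
    (\sum_(w <- map v L) w + (u + \sum_(w <- map v (gen_rays v T u r)) w)).
Proof.
move=> u_box u_beta r_ge0 ST coneS_u LE_S.
have coneS_L w : w \in map v L -> inConeQ v S (toQ w).
  by case/mapP => j jL ->; apply/inConeQ_gen/LE_S; rewrite mem_cat jL.
have coneS_g w : w \in u :: map v (gen_rays v T u r) -> inConeQ v S (toQ w).
  rewrite inE => /predU1P [->|/mapP [j jE ->]] //.
  by apply/inConeQ_gen/LE_S; rewrite mem_cat jE orbT.
pose rr := fscale 1 (Defs.fprod v T (map v L)) ++ [::].
have rrR : in_R v T rr.
  apply: inR_cons (inR_nil _ _) => j jL.
  by apply: (ray_in_fan_of_simplex _ ST); apply: LE_S; rewrite mem_cat jL.
have g_gen : is_gen v T beta (gen_of v T u r) by exists u, r.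
exists (fmul v T rr (gen_of v T u r) ++ [::]).
  exact: inM_cons rrR g_gen (inM_nil _ _ _).
have cc : common_cone v T (\sum_(w <- map v L) w)
                          (u + \sum_(w <- map v (gen_rays v T u r)) w).
  apply/asboolP; exists S => //; split; first exact: inConeQ_toQ_sum.
  by have := inConeQ_toQ_sum coneS_g; rewrite big_cons.
rewrite /rr gen_ofE (fprod_max_cone ST coneS_L) (fprod_max_cone ST coneS_g).
by rewrite big_cons /fmul /= cc /= !mulr1.
Qed.

Lemma semigroup_mono_in_M beta w : inK v (toQ w) ->
  (exists2 k : nat, (0 < k)%N & in_semigroup v (beta - w + (k * Pidx v)%:Z *: w)) ->
  mono_in_M v T beta w.
Proof.
move=> wK [k _ [c beta_c]].
have [simplex cover _] := tri.
have [S ST [a [a_ge0 a_out w_a]]] := cover _ wK.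
have Pa_int := Pidx_coord_int (simplex S ST).1 (simplex S ST).2 a_out w_a.
pose fl j := Num.floor (a j).
have fl_ge0 j : 0 <= fl j by rewrite floor_ge0.
have fl_out j : j \notin S -> fl j = 0 by move=> jS; rewrite /fl a_out ?floor0.
pose e j := a j - (fl j)%:~R.
have e_ge0 j : 0 <= e j by rewrite subr_ge0 floor_le.
have e_out j : j \notin S -> e j = 0 by move=> jS; rewrite /e a_out ?fl_out ?subr0.
pose u := w - \sum_(j < n) fl j *: v j.
have u_e : toQ u = \sum_(j < n) e j *: toQ (v j).
  by rewrite toQB toQ_comb w_a -sumrB; apply: eq_bigr => j _; rewrite scalerBl.
have u_box : in_box v T u.
  exists S => //; exists e; split=> // j; rewrite e_ge0 ltrBlDl.
  by rewrite (lt_le_trans (floorD1_gt (a j))) // intrD.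
pose r j := (c j)%:Z + fl j - k%:Z * Num.floor ((Pidx v)%:R * a j).
have u_beta : u + \sum_(j < n) r j *: v j = beta.
  exact: semigroup_shift_split w_a Pa_int beta_c.
have r_ge0 j : ~ ray_in_fan v T j -> 0 <= r j.
  move=> not_ray; have jS : j \notin S.
    by apply/negP => jS; apply: not_ray; apply: ray_in_fan_of_simplex ST jS.
  by rewrite /r fl_out // a_out // mulr0 floor0 mulr0 subr0 addr0.
have E_fl j : j \in gen_rays v T u r -> 0 < fl j.
  rewrite (mem_gen_rays r j ST e_ge0 e_out u_e) => /and3P [rj_neg _ /eqP ej0].
  rewrite lt_def fl_ge0 andbT; apply: contraTneq rj_neg => flj0.
  have aj0 : a j = 0 by move: ej0; rewrite /e flj0 subr0.
  by rewrite /r flj0 aj0 mulr0 floor0 mulr0 subr0 addr0 -leNgt.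
pose E := gen_rays v T u r.
have [L count_LE] := exists_seq_counts (filter_uniq _ (enum_uniq _)) fl_ge0 E_fl.
have LE_S j : j \in L ++ E -> j \in S.
  move=> jLE; apply: contraTT (jLE) => /fl_out fl0.
  by rewrite -has_pred1 has_count -ltz_nat count_LE fl0.
suff -> : w = \sum_(x <- map v L) x + (u + \sum_(x <- map v E) x).
  by apply: mono_in_M_of_gen u_box u_beta r_ge0 ST _ LE_S; exists e.
rewrite addrCA -big_cat -map_cat sum_count /u -addrA -[LHS]addr0; congr (_ + _).
by rewrite -sumrN -big_split big1 // => j _ /=; rewrite count_LE addNr.
Qed.

End Generators.

Theorem proposition2p14 (d n : nat) (v : 'I_n -> 'rV[int]_d) (h : 'cV[int]_d)
  (T : {set {set 'I_n}}) (beta w : 'rV[int]_d) :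
  injective v ->
  (forall x : 'rV[int]_d, exists c : 'I_n -> int, x = \sum_(j < n) c j *: v j) ->
  (forall j, (v j *m h) 0 0 = 1) ->
  is_triangulation v T -> is_regular v T ->
  inK v (toQ w) ->
  (mono_in_M v T beta w <->
   exists2 k : nat, (0 < k)%N &
     in_semigroup v (beta - w + (k * Pidx v)%:Z *: w)).
Proof.
move=> v_inj _ v_h tri _ wK; split=> [w_M|w_sg].
  exact: (mono_in_M_semigroup v_inj v_h tri w_M).
exact: (semigroup_mono_in_M v_inj v_h tri wK w_sg).
Qed.
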